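(* Let $\mathbf{A}=\langle A;\oplus,-,{}^{+},{}^{-},0,1\rangle$ be a quasi-MV* algebra and let $\mathbf{W}=\langle W;\to,\neg,{}^{+},{}^{-},1\rangle$ be a quasi-Wajsberg* algebra. Let $f(\mathbf{A})=\langle A;\to,\neg,{}^{+},{}^{-},1\rangle$, where $x\to y:=-x\oplus y$ and $\neg x:=-x$ (the operations ${}^+,{}^-$ and the constant $1$ are those of $\mathbf{A}$), and let $g(\mathbf{W})=\langle W;\oplus,-,{}^{+},{}^{-},0,1\rangle$, where $0:=x\to x$ (for any $x\in W$), $x\oplus y:=\neg x\to y$ and $-x:=\neg x$ (the operations ${}^+,{}^-$ and the constant $1$ are those of $\mathbf{W}$). Then $g(f(\mathbf{A}))=\mathbf{A}$ and $f(g(\mathbf{W}))=\mathbf{W}$; hence $f$ and $g$ are mutually inverse correspondences between quasi-MV* algebras and quasi-Wajsberg* algebras.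
   Context: A quasi-MV* algebra is an algebra $\langle A;\oplus,-,{}^{+},{}^{-},0,1\rangle$ of type $\langle2,1,1,1,0,0\rangle$ such that for all $x,y,z\in A$: (QMV*1) $x\oplus y=y\oplus x$; (QMV*2) $(1\oplus x)\oplus(y\oplus(1\oplus z))=((1\oplus x)\oplus y)\oplus(1\oplus z)$; (QMV*3) $(x\oplus 1)\oplus 1=1$; (QMV*4) $(x\oplus y)\oplus 0=x\oplus y$; (QMV*5) $x^{+}\oplus 0=(x\oplus 0)^{+}=1\oplus(-1\oplus x)$ and $x^{-}\oplus 0=(x\oplus 0)^{-}=-1\oplus(1\oplus x)$; (QMV*6) $x\oplus y=(x^{+}\oplus y^{+})\oplus(x^{-}\oplus y^{-})$; (QMV*7) $0=-0$; (QMV*8) $x\oplus(-x)=0$; (QMV*9) $-(x\oplus y)=-x\oplus(-y)$; (QMV*10) $-(-x)=x$; (QMV*11) $(-x\oplus(x\oplus y))^{+}=-x^{+}\oplus(x^{+}\oplus y^{+})$; (QMV*12) $x\vee y=y\vee x$; (QMV*13) $x\vee(y\vee z)=(x\vee y)\vee z$; (QMV*14) $x\oplus(y\vee z)=(x\oplus y)\vee(x\oplus z)$; where $x\vee y:=(x^{+}\oplus(-x^{+}\oplus y^{+})^{+})\oplus(x^{-}\oplus(-x^{-}\oplus y^{-})^{+})$. Here the postfix operations ${}^+,{}^-$ bind tighter than $-$, so e.g. $-x^{+}$ means $-(x^{+})$. A quasi-Wajsberg* algebra is an algebra $\langle W;\to,\neg,{}^{+},{}^{-},1\rangle$ of type $\langle2,1,1,1,0\rangle$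 such that for all $x,y,z\in W$: (QW*1) $x\to y=\neg y\to\neg x$; (QW*2) $(x\to 1)\to((y\to 1)\to z)=(y\to 1)\to((x\to 1)\to z)$; (QW*3) $(1\to x)\to 1=1$; (QW*4) $(z\to z)\to(x\to y)=x\to y$; (QW*5) $(1\to 1)\to x^{+}=((1\to 1)\to x)^{+}=(x\to 1)\to 1$ and $(1\to 1)\to x^{-}=((1\to 1)\to x)^{-}=(x\to\neg 1)\to\neg 1$; (QW*6) $x\to y=(y^{+}\to x^{-})\to(x^{+}\to y^{-})$; (QW*7) $\neg(x\to y)=y\to x$; (QW*8) $\neg\neg x=x$; (QW*9) $(x\to(\neg x\to y))^{+}=x^{+}\to(\neg x^{+}\to y^{+})$; (QW*10) $x\vee y=y\vee x$; (QW*11) $x\vee(y\vee z)=(x\vee y)\vee z$; (QW*12) $x\to(y\vee z)=(x\to y)\vee(x\to z)$; where $x\vee y:=((x^{+}\to y^{+})^{+}\to(\neg x)^{-})\to((y^{-}\to x^{-})^{-}\to x^{-})$. Conventions: ${}^+,{}^-$ bind tighter than $\neg$, which binds tighter than $\to$ (so $\neg x^{+}$ means $\neg(x^{+})$ and $\neg x\to y$ means $(\neg x)\to y$). In a quasi-Wajsberg* algebra $x\to x=y\to y$ for all $x,y$, so $0:=x\to x$ is well defined. *)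

Record qmv_sig (A : Type) := QMVSig {
  qoplus : A -> A -> A;
  qneg   : A -> A;
  qplus  : A -> A;
  qminus : A -> A;
  qzero  : A;
  qone   : A }.
Arguments QMVSig {A}.
Arguments qoplus {A}. Arguments qneg {A}. Arguments qplus {A}.
Arguments qminus {A}. Arguments qzero {A}. Arguments qone {A}.

Record qw_sig (W : Type) := QWSig {
  wimp   : W -> W -> W;
  wneg   : W -> W;
  wplus  : W -> W;
  wminus : W -> W;
  wone   : W }.
Arguments QWSig {W}.
Arguments wimp {W}. Arguments wneg {W}. Arguments wplus {W}.
Arguments wminus {W}. Arguments wone {W}.

Definition qmv_join {A} (a : qmv_sig A) (x y : A) : A :=
  let op := qoplus a in let n := qneg a in let p := qplus a in let m := qminus a in
  op (op (p x) (p (op (n (p x)) (p y)))) (op (m x) (p (op (n (m x)) (m y)))).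

Definition is_qmvstar {A} (a : qmv_sig A) : Prop :=
  let op := qoplus a in let n := qneg a in let p := qplus a in let m := qminus a in
  let z := qzero a in let o := qone a in let jn := qmv_join a in
  (forall x y, op x y = op y x) /\
  (forall x y w, op (op o x) (op y (op o w)) = op (op (op o x) y) (op o w)) /\
  (forall x, op (op x o) o = o) /\
  (forall x y, op (op x y) z = op x y) /\
  (forall x, op (p x) z = p (op x z) /\ p (op x z) = op o (op (n o) x)) /\
  (forall x, op (m x) z = m (op x z) /\ m (op x z) = op (n o) (op o x)) /\
  (forall x y, op x y = op (op (p x) (p y)) (op (m x) (m y))) /\
  (z = n z) /\
  (forall x, op x (n x) = z) /\
  (forall x y, n (op x y) = op (n x) (n y)) /\
  (forall x, n (n x) = x) /\
  (forall x y, p (op (n x) (op x y)) = op (n (p x)) (op (p x) (p y))) /\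
  (forall x y, jn x y = jn y x) /\
  (forall x y w, jn x (jn y w) = jn (jn x y) w) /\
  (forall x y w, op x (jn y w) = jn (op x y) (op x w)).

Definition qw_join {W} (w : qw_sig W) (x y : W) : W :=
  let i := wimp w in let n := wneg w in let p := wplus w in let m := wminus w in
  i (i (p (i (p x) (p y))) (m (n x))) (i (m (i (m y) (m x))) (m x)).

Definition is_qwstar {W} (w : qw_sig W) : Prop :=
  let i := wimp w in let n := wneg w in let p := wplus w in let m := wminus w in
  let o := wone w in let jn := qw_join w in
  (forall x y, i x y = i (n y) (n x)) /\
  (forall x y z, i (i x o) (i (i y o) z) = i (i y o) (i (i x o) z)) /\
  (forall x, i (i o x) o = o) /\
  (forall x y z, i (i z z) (i x y) = i x y) /\
  (forall x, i (i o o) (p x) = p (i (i o o) x) /\ p (i (i o o) x) = i (i x o) o) /\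
  (forall x, i (i o o) (m x) = m (i (i o o) x) /\ m (i (i o o) x) = i (i x (n o)) (n o)) /\
  (forall x y, i x y = i (i (p y) (m x)) (i (p x) (m y))) /\
  (forall x y, n (i x y) = i y x) /\
  (forall x, n (n x) = x) /\
  (forall x y, p (i x (i (n x) y)) = i (p x) (i (n (p x)) (p y))) /\
  (forall x y, jn x y = jn y x) /\
  (forall x y z, jn x (jn y z) = jn (jn x y) z) /\
  (forall x y z, i x (jn y z) = jn (i x y) (i x z)).

Definition f_qmv {A} (a : qmv_sig A) : qw_sig A :=
  QWSig (fun x y => qoplus a (qneg a x) y) (qneg a) (qplus a) (qminus a) (qone a).

Definition g_qw {W} (w : qw_sig W) : qmv_sig W :=
  QMVSig (fun x y => wimp w (wneg w x) y) (wneg w) (wplus w) (wminus w)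
         (wimp w (wone w) (wone w)) (wone w).

From Stdlib Require Import Setoid FunctionalExtensionality.

(* The two translations undo each other as soon as [- - x = x], [x ⊕ -x = 0] and
   commutativity hold. For the axioms, the point is that [⊕] only sees its arguments
   up to the regularization [x ↦ x ⊕ 0] (dually [x ↦ 0 → x]): distributivity over the
   join at [y ∨ y = y ⊕ 0] gives [x ⊕ (y ⊕ 0) = x ⊕ y]. Since [-(x⁻)] and [(-x)⁺] have
   the same regularization by QMV*5, they can be exchanged inside sums, and this is
   exactly the discrepancy between the two joins and between QMV*6 and QW*6. *)

Lemma g_f_qmv (A : Type) (a : qmv_sig A) :
  (forall x y, qoplus a x y = qoplus a y x) ->
  (forall x, qoplus a x (qneg a x) = qzero a) ->
  (forall x, qneg a (qneg a x) = x) ->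
  g_qw (f_qmv a) = a.
Proof.
  destruct a as [op n p m z o]; unfold g_qw, f_qmv; cbn; intros Hcomm Hneg_r Hinvol.
  rewrite Hcomm, Hneg_r; f_equal.
  extensionality x; extensionality y; now rewrite Hinvol.
Qed.

Lemma f_g_qw (W : Type) (w : qw_sig W) :
  (forall x, wneg w (wneg w x) = x) -> f_qmv (g_qw w) = w.
Proof.
  destruct w as [i n p m o]; unfold g_qw, f_qmv; cbn; intros Hinvol; f_equal.
  extensionality x; extensionality y; now rewrite Hinvol.
Qed.

Section QMVStar.

Variables (A : Type) (a : qmv_sig A).
Hypothesis Ha : is_qmvstar a.

Local Infix "⊕" := (qoplus a) (at level 50, left associativity).
Local Notation "- x" := (qneg a x).
Local Notation "x ⁺" := (qplus a x) (at level 1, format "x ⁺").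
Local Notation "x ⁻" := (qminus a x) (at level 1, format "x ⁻").
Local Notation "𝟎" := (qzero a).
Local Notation "𝟏" := (qone a).
Local Infix "∨" := (qmv_join a) (at level 55, right associativity).

Lemma qoplus_comm x y : x ⊕ y = y ⊕ x.
Proof. now destruct Ha as (H & _). Qed.

Lemma qoplus_assoc_one x y z : (𝟏 ⊕ x) ⊕ (y ⊕ (𝟏 ⊕ z)) = ((𝟏 ⊕ x) ⊕ y) ⊕ (𝟏 ⊕ z).
Proof. now destruct Ha as (_ & H & _). Qed.

Lemma qoplus_one_one x : (x ⊕ 𝟏) ⊕ 𝟏 = 𝟏.
Proof. now destruct Ha as (_ & _ & H & _). Qed.

Lemma qoplus_zero_oplus x y : (x ⊕ y) ⊕ 𝟎 = x ⊕ y.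
Proof. now destruct Ha as (_ & _ & _ & H & _). Qed.

Lemma qplus_oplus_zero x : x⁺ ⊕ 𝟎 = (x ⊕ 𝟎)⁺.
Proof. now destruct Ha as (_ & _ & _ & _ & H & _); destruct (H x). Qed.

Lemma qplus_zero_def x : (x ⊕ 𝟎)⁺ = 𝟏 ⊕ (-𝟏 ⊕ x).
Proof. now destruct Ha as (_ & _ & _ & _ & H & _); destruct (H x). Qed.

Lemma qminus_oplus_zero x : x⁻ ⊕ 𝟎 = (x ⊕ 𝟎)⁻.
Proof. now destruct Ha as (_ & _ & _ & _ & _ & H & _); destruct (H x). Qed.

Lemma qminus_zero_def x : (x ⊕ 𝟎)⁻ = -𝟏 ⊕ (𝟏 ⊕ x).
Proof. now destruct Ha as (_ & _ & _ & _ & _ & H & _); destruct (H x). Qed.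

Lemma qoplus_split x y : x ⊕ y = (x⁺ ⊕ y⁺) ⊕ (x⁻ ⊕ y⁻).
Proof. now destruct Ha as (_ & _ & _ & _ & _ & _ & H & _). Qed.

Lemma qneg_zero : 𝟎 = -𝟎.
Proof. now destruct Ha as (_ & _ & _ & _ & _ & _ & _ & H & _). Qed.

Lemma qoplus_neg_r x : x ⊕ -x = 𝟎.
Proof. now destruct Ha as (_ & _ & _ & _ & _ & _ & _ & _ & H & _). Qed.

Lemma qneg_oplus x y : -(x ⊕ y) = -x ⊕ -y.
Proof. now destruct Ha as (_ & _ & _ & _ & _ & _ & _ & _ & _ & H & _). Qed.

Lemma qneg_involutive x : - - x = x.
Proof. now destruct Ha as (_ & _ & _ & _ & _ & _ & _ & _ & _ & _ & H & _). Qed.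

Lemma qplus_neg_oplus x y : (-x ⊕ (x ⊕ y))⁺ = -x⁺ ⊕ (x⁺ ⊕ y⁺).
Proof. now destruct Ha as (_ & _ & _ & _ & _ & _ & _ & _ & _ & _ & _ & H & _). Qed.

Lemma qjoin_comm x y : x ∨ y = y ∨ x.
Proof. now destruct Ha as (_ & _ & _ & _ & _ & _ & _ & _ & _ & _ & _ & _ & H & _). Qed.

Lemma qjoin_assoc x y z : x ∨ (y ∨ z) = (x ∨ y) ∨ z.
Proof. now destruct Ha as (_ & _ & _ & _ & _ & _ & _ & _ & _ & _ & _ & _ & _ & H & _). Qed.

Lemma qoplus_join_distr x y z : x ⊕ (y ∨ z) = (x ⊕ y) ∨ (x ⊕ z).
Proof. now destruct Ha as (_ & _ & _ & _ & _ & _ & _ & _ & _ & _ & _ & _ & _ & _ & H). Qed.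

Lemma qzero_oplus_zero : 𝟎 ⊕ 𝟎 = 𝟎.
Proof. rewrite qneg_zero at 2; apply qoplus_neg_r. Qed.

Lemma qone_oplus_zero : 𝟏 ⊕ 𝟎 = 𝟏.
Proof. now rewrite <- (qoplus_one_one 𝟎), qoplus_zero_oplus. Qed.

Lemma qneg_one_oplus_zero : -𝟏 ⊕ 𝟎 = -𝟏.
Proof. now rewrite qneg_zero, <- qneg_oplus, qone_oplus_zero. Qed.

Lemma qplus_zero : 𝟎⁺ = 𝟎.
Proof.
  now rewrite <- qzero_oplus_zero at 1;
    rewrite qplus_zero_def, qneg_one_oplus_zero, qoplus_neg_r.
Qed.

Lemma qminus_zero : 𝟎⁻ = 𝟎.
Proof.
  now rewrite <- qzero_oplus_zero at 1;
    rewrite qminus_zero_def, qone_oplus_zero, qoplus_comm, qoplus_neg_r.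
Qed.

Lemma qjoin_diag x : x ∨ x = x ⊕ 𝟎.
Proof.
  unfold qmv_join.
  rewrite (qoplus_comm (-x⁺)), (qoplus_comm (-x⁻)), !qoplus_neg_r, qplus_zero.
  now rewrite (qoplus_split x 𝟎), qplus_zero, qminus_zero.
Qed.

Lemma qoplus_oplus_zero_r x y : x ⊕ (y ⊕ 𝟎) = x ⊕ y.
Proof. now rewrite <- qjoin_diag, qoplus_join_distr, qjoin_diag, qoplus_zero_oplus. Qed.

Lemma qoplus_oplus_zero_l x y : (x ⊕ 𝟎) ⊕ y = x ⊕ y.
Proof. now rewrite qoplus_comm, qoplus_oplus_zero_r, qoplus_comm. Qed.

Lemma qoplus_congr_zero u u' v : u ⊕ 𝟎 = u' ⊕ 𝟎 -> u ⊕ v = u' ⊕ v.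
Proof. intros E; now rewrite <- qoplus_oplus_zero_l, E, qoplus_oplus_zero_l. Qed.

Lemma qneg_minus_oplus u v : -u⁻ ⊕ v = (-u)⁺ ⊕ v.
Proof.
  apply qoplus_congr_zero.
  rewrite qplus_oplus_zero, qplus_zero_def, qneg_zero, <- qneg_oplus.
  now rewrite qminus_oplus_zero, qminus_zero_def, !qneg_oplus, qneg_involutive.
Qed.

Lemma qneg_plus_oplus u v : -u⁺ ⊕ v = (-u)⁻ ⊕ v.
Proof.
  apply qoplus_congr_zero.
  rewrite qminus_oplus_zero, qminus_zero_def, qneg_zero, <- qneg_oplus.
  now rewrite qplus_oplus_zero, qplus_zero_def, !qneg_oplus, qneg_involutive.
Qed.

Lemma qoplus_assoc_neg_one x y z :
  (-𝟏 ⊕ x) ⊕ (y ⊕ (-𝟏 ⊕ z)) = ((-𝟏 ⊕ x) ⊕ y) ⊕ (-𝟏 ⊕ z).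
Proof.
  rewrite <- (qneg_involutive x), <- (qneg_involutive y), <- (qneg_involutive z).
  rewrite <- !qneg_oplus; f_equal; apply qoplus_assoc_one.
Qed.

Lemma qw_join_f_qmv x y : qw_join (f_qmv a) x y = x ∨ y.
Proof.
  unfold qw_join, qmv_join; cbn.
  rewrite qneg_oplus, qneg_involutive; f_equal.
  - now rewrite qoplus_comm, qneg_minus_oplus, qneg_involutive.
  - now rewrite (qoplus_comm x⁻), qneg_minus_oplus, qneg_oplus, !qneg_involutive,
      (qoplus_comm y⁻).
Qed.

Lemma f_qmv_is_qwstar : is_qwstar (f_qmv a).
Proof.
  unfold is_qwstar; cbn -[qw_join]; repeat split; intros;
    rewrite ?qw_join_f_qmv, ?qneg_oplus, ?qneg_involutive; try reflexivity.
  - apply qoplus_comm.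
  - rewrite (qoplus_comm x), (qoplus_comm y), (qoplus_comm (-𝟏 ⊕ y)), qoplus_assoc_neg_one.
    now rewrite qoplus_comm, (qoplus_comm (-𝟏 ⊕ x)), qoplus_assoc_neg_one, qoplus_comm.
  - now rewrite (qoplus_comm 𝟏), qoplus_one_one.
  - now rewrite qoplus_neg_r, qoplus_comm, qoplus_zero_oplus.
  - now rewrite qoplus_neg_r, !(qoplus_comm 𝟎), qplus_oplus_zero.
  - now rewrite qoplus_neg_r, qoplus_comm, qplus_zero_def, qoplus_comm, (qoplus_comm x).
  - now rewrite qoplus_neg_r, !(qoplus_comm 𝟎), qminus_oplus_zero.
  - now rewrite qoplus_neg_r, qoplus_comm, qminus_zero_def, qoplus_comm, (qoplus_comm x).
  - now rewrite (qoplus_comm y⁺), qneg_minus_oplus, qneg_plus_oplus, <- qoplus_split.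
  - apply qoplus_comm.
  - apply qplus_neg_oplus.
  - apply qjoin_comm.
  - apply qjoin_assoc.
  - apply qoplus_join_distr.
Qed.

End QMVStar.

Section QWStar.

Variables (W : Type) (w : qw_sig W).
Hypothesis Hw : is_qwstar w.

Local Infix "⇒" := (wimp w) (at level 56, right associativity).
Local Notation "¬ x" := (wneg w x) (at level 35, right associativity).
Local Notation "x ⁺" := (wplus w x) (at level 1, format "x ⁺").
Local Notation "x ⁻" := (wminus w x) (at level 1, format "x ⁻").
Local Notation "𝟏" := (wone w).
Local Notation "𝟎" := (wone w ⇒ wone w).
Local Infix "∨" := (qw_join w) (at level 55, right associativity).
Local Notation "x ⊕ y" := (¬x ⇒ y) (at level 50, left associativity, only parsing).

Lemma wimp_contra x y : x ⇒ y = ¬y ⇒ ¬x.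
Proof. now destruct Hw as (H & _). Qed.

Lemma wimp_exchange_one x y z : (x ⇒ 𝟏) ⇒ (y ⇒ 𝟏) ⇒ z = (y ⇒ 𝟏) ⇒ (x ⇒ 𝟏) ⇒ z.
Proof. now destruct Hw as (_ & H & _). Qed.

Lemma wimp_one_l_one x : (𝟏 ⇒ x) ⇒ 𝟏 = 𝟏.
Proof. now destruct Hw as (_ & _ & H & _). Qed.

Lemma wimp_self_imp z x y : (z ⇒ z) ⇒ x ⇒ y = x ⇒ y.
Proof. now destruct Hw as (_ & _ & _ & H & _). Qed.

Lemma wzero_imp_plus x : 𝟎 ⇒ x⁺ = (𝟎 ⇒ x)⁺.
Proof. now destruct Hw as (_ & _ & _ & _ & H & _); destruct (H x). Qed.

Lemma wplus_zero_imp_def x : (𝟎 ⇒ x)⁺ = (x ⇒ 𝟏) ⇒ 𝟏.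
Proof. now destruct Hw as (_ & _ & _ & _ & H & _); destruct (H x). Qed.

Lemma wzero_imp_minus x : 𝟎 ⇒ x⁻ = (𝟎 ⇒ x)⁻.
Proof. now destruct Hw as (_ & _ & _ & _ & _ & H & _); destruct (H x). Qed.

Lemma wminus_zero_imp_def x : (𝟎 ⇒ x)⁻ = (x ⇒ ¬𝟏) ⇒ ¬𝟏.
Proof. now destruct Hw as (_ & _ & _ & _ & _ & H & _); destruct (H x). Qed.

Lemma wimp_split x y : x ⇒ y = (y⁺ ⇒ x⁻) ⇒ (x⁺ ⇒ y⁻).
Proof. now destruct Hw as (_ & _ & _ & _ & _ & _ & H & _). Qed.

Lemma wneg_imp x y : ¬(x ⇒ y) = y ⇒ x.
Proof. now destruct Hw as (_ & _ & _ & _ & _ & _ & _ & H & _). Qed.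

Lemma wneg_involutive x : ¬¬x = x.
Proof. now destruct Hw as (_ & _ & _ & _ & _ & _ & _ & _ & H & _). Qed.

Lemma wplus_imp_neg x y : (x ⇒ ¬x ⇒ y)⁺ = x⁺ ⇒ ¬x⁺ ⇒ y⁺.
Proof. now destruct Hw as (_ & _ & _ & _ & _ & _ & _ & _ & _ & H & _). Qed.

Lemma wjoin_comm x y : x ∨ y = y ∨ x.
Proof. now destruct Hw as (_ & _ & _ & _ & _ & _ & _ & _ & _ & _ & H & _). Qed.

Lemma wjoin_assoc x y z : x ∨ (y ∨ z) = (x ∨ y) ∨ z.
Proof. now destruct Hw as (_ & _ & _ & _ & _ & _ & _ & _ & _ & _ & _ & H & _). Qed.

Lemma wimp_join_distr x y z : x ⇒ (y ∨ z) = (x ⇒ y) ∨ (x ⇒ z).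
Proof. now destruct Hw as (_ & _ & _ & _ & _ & _ & _ & _ & _ & _ & _ & _ & H). Qed.

Lemma wimp_self x : x ⇒ x = 𝟎.
Proof.
  rewrite <- (wimp_self_imp 𝟏 x x) at 1.
  now rewrite wimp_contra, !wneg_imp, wimp_self_imp.
Qed.

Lemma wneg_zero : ¬𝟎 = 𝟎.
Proof. apply wneg_imp. Qed.

Lemma wzero_imp_neg_one : 𝟎 ⇒ ¬𝟏 = ¬𝟏.
Proof.
  now rewrite wimp_contra, wneg_involutive, wneg_zero, <- (wneg_imp 𝟎 𝟏), wimp_one_l_one.
Qed.

Lemma wplus_zero : 𝟎⁺ = 𝟎.
Proof. now rewrite <- (wimp_self 𝟎) at 1; rewrite wplus_zero_imp_def, wimp_one_l_one. Qed.

Lemma wminus_zero : 𝟎⁻ = 𝟎.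
Proof.
  now rewrite <- (wimp_self 𝟎) at 1;
    rewrite wminus_zero_imp_def, wzero_imp_neg_one, wimp_self.
Qed.

Lemma wneg_zero_imp u : ¬(𝟎 ⇒ u) = 𝟎 ⇒ ¬u.
Proof. now rewrite wneg_imp, wimp_contra, wneg_zero. Qed.

Lemma wzero_imp_neg_plus u : 𝟎 ⇒ ¬u⁺ = 𝟎 ⇒ (¬u)⁻.
Proof.
  rewrite <- wneg_zero_imp, wzero_imp_plus, wplus_zero_imp_def, wzero_imp_minus.
  now rewrite wminus_zero_imp_def, wneg_imp, (wimp_contra (¬u)), wneg_involutive,
    wimp_contra, wneg_involutive, wneg_imp.
Qed.

Lemma wzero_imp_neg_minus u : 𝟎 ⇒ ¬u⁻ = 𝟎 ⇒ (¬u)⁺.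
Proof.
  rewrite <- wneg_zero_imp, wzero_imp_minus, wminus_zero_imp_def, wzero_imp_plus.
  now rewrite wplus_zero_imp_def, wneg_imp, wimp_contra, wneg_imp, wneg_involutive,
    (wimp_contra (¬𝟏) u), wneg_involutive.
Qed.

Lemma wjoin_diag x : x ∨ x = 𝟎 ⇒ x.
Proof.
  unfold qw_join; rewrite (wimp_self x⁺), (wimp_self x⁻), wplus_zero, wminus_zero.
  rewrite (wimp_split 𝟎 x), wplus_zero, wminus_zero; f_equal.
  now rewrite (wimp_contra x⁺), wneg_zero, wzero_imp_neg_plus.
Qed.

Lemma wimp_zero_imp_r x y : x ⇒ 𝟎 ⇒ y = x ⇒ y.
Proof. now rewrite <- wjoin_diag, wimp_join_distr, wjoin_diag, wimp_self_imp. Qed.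

Lemma wimp_zero_imp_l x y : (𝟎 ⇒ x) ⇒ y = x ⇒ y.
Proof. now rewrite wimp_contra, wneg_zero_imp, wimp_zero_imp_r, <- wimp_contra. Qed.

Lemma wimp_congr_r u u' v : 𝟎 ⇒ u = 𝟎 ⇒ u' -> v ⇒ u = v ⇒ u'.
Proof. intros E; now rewrite <- wimp_zero_imp_r, E, wimp_zero_imp_r. Qed.

Lemma wimp_congr_l u u' v : 𝟎 ⇒ u = 𝟎 ⇒ u' -> u ⇒ v = u' ⇒ v.
Proof. intros E; now rewrite <- wimp_zero_imp_l, E, wimp_zero_imp_l. Qed.

Lemma qmv_join_g_qw x y : qmv_join (g_qw w) x y = x ∨ y.
Proof.
  unfold qmv_join, qw_join; cbn.
  rewrite !wneg_involutive, wneg_imp; f_equal.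
  - apply wimp_congr_r, wzero_imp_neg_plus.
  - rewrite (wimp_contra (¬x⁻)), wneg_involutive, <- (wneg_imp x⁻ y⁻).
    apply wimp_congr_l, wzero_imp_neg_plus.
Qed.

Lemma woplus_comm x y : x ⊕ y = y ⊕ x.
Proof. now rewrite wimp_contra, !wneg_involutive. Qed.

Lemma wneg_oplus x y : ¬(x ⊕ y) = ¬x ⊕ ¬y.
Proof. now rewrite wneg_imp, wimp_contra. Qed.

Lemma wneg_imp_imp p q z : ¬(¬p ⇒ ¬q ⇒ ¬z) = p ⇒ q ⇒ z.
Proof. now rewrite wneg_imp, <- wimp_contra, wimp_contra, wneg_involutive, wneg_imp. Qed.

Lemma wneg_imp_neg_one x : ¬(x ⇒ ¬𝟏) = ¬x ⇒ 𝟏.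
Proof. now rewrite wneg_imp, wimp_contra, wneg_involutive. Qed.

(* [QW*2] is the exchange law for [¬𝟏 ⊕ _]; negating it yields the one for [𝟏 ⊕ _]. *)
Lemma woplus_exchange_one x y z : (𝟏 ⊕ x) ⊕ ((𝟏 ⊕ y) ⊕ z) = (𝟏 ⊕ y) ⊕ ((𝟏 ⊕ x) ⊕ z).
Proof.
  rewrite !wneg_imp.
  rewrite <- (wneg_imp_imp (x ⇒ ¬𝟏) (y ⇒ ¬𝟏) z), <- (wneg_imp_imp (y ⇒ ¬𝟏) (x ⇒ ¬𝟏) z).
  now rewrite !wneg_imp_neg_one, wimp_exchange_one.
Qed.

Lemma wneg_imp_zero u : ¬u ⇒ 𝟎 = 𝟎 ⇒ u.
Proof. now rewrite wimp_contra, wneg_zero, wneg_involutive. Qed.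

Lemma g_qw_is_qmvstar : is_qmvstar (g_qw w).
Proof.
  unfold is_qmvstar; cbn -[qmv_join]; repeat split; intros;
    rewrite ?qmv_join_g_qw, ?wneg_imp_zero.
  - apply woplus_comm.
  - now rewrite (woplus_comm y), woplus_exchange_one, woplus_comm.
  - rewrite wneg_imp; apply wimp_one_l_one.
  - apply wimp_self_imp.
  - apply wzero_imp_plus.
  - now rewrite wplus_zero_imp_def, wneg_involutive, (wimp_contra (¬𝟏)), wneg_imp,
      wneg_involutive.
  - apply wzero_imp_minus.
  - now rewrite wminus_zero_imp_def, wneg_involutive, (wimp_contra 𝟏), wneg_imp.
  - rewrite wneg_imp, (wimp_split (¬x) y); f_equal; symmetry.
    + apply wimp_congr_r, wzero_imp_neg_plus.
    + apply wimp_congr_l, wzero_imp_neg_minus.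
  - symmetry; apply wneg_zero.
  - apply wimp_self.
  - apply wneg_oplus.
  - apply wneg_involutive.
  - rewrite !wneg_involutive; apply wplus_imp_neg.
  - apply wjoin_comm.
  - apply wjoin_assoc.
  - apply wimp_join_distr.
Qed.

End QWStar.

Theorem theorem3p1 :
  forall (A : Type) (a : qmv_sig A) (W : Type) (w : qw_sig W),
    is_qmvstar a -> is_qwstar w ->
    is_qwstar (f_qmv a) /\ is_qmvstar (g_qw w) /\
    g_qw (f_qmv a) = a /\ f_qmv (g_qw w) = w.
Proof.
  intros A a W w Ha Hw.
  split; [exact (f_qmv_is_qwstar _ _ Ha) |].
  split; [exact (g_qw_is_qmvstar _ _ Hw) |].
  split.
  - exact (g_f_qmv _ _ (qoplus_comm _ _ Ha) (qoplus_neg_r _ _ Ha) (qneg_involutive _ _ Ha)).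
  - exact (f_g_qw _ _ (wneg_involutive _ _ Hw)).
Qed.
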